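(* With the notation of the context, let $\Sigma:=\sum_{j\in A}\sigma_j$. Then $\Sigma=\frac{|A|}{|G|^k}\sum_{x\in A^k}\sum_{w\in A}\eta^x_w\,|x,S^x_w\rangle\langle x,S^x_w|$, each $\sigma_d$ is a density operator, the pretty good measurement operators $\Sigma^{-1/2}\sigma_j\Sigma^{-1/2}$ (inverse on the support of $\Sigma$) equal $$E_j=\frac{1}{|A|}\sum_{x\in A^k}\sum_{w,v\in A}\chi_w(j)\overline{\chi_v(j)}\,|x,S^x_w\rangle\langle x,S^x_v|,$$ and for every $d\in A$, $$\mathrm{tr}(E_d\sigma_d)=\frac{p}{|G|^{k+1}}\sum_{x\in A^k}\Big(\sum_{w\in A}\sqrt{\eta^x_w}\Big)^2 .$$
   Context: $A$ finite abelian group, $p$ prime, $\varphi\in\mathrm{Aut}(A)$ with $\varphi^p=\mathrm{id}$, $|G|:=p|A|$, $k\ge1$. $\{\chi_x\}_{x\in A}$ are the characters of $A$ indexed so that $\chi_x\chi_{x'}=\chi_{x+x'}$ and $\chi_x(y)=\chi_y(x)$. For $b\in\mathbb{Z}_p$ (identified with $\{0,\dots,p-1\}$) let $\Phi_b:=\sum_{i=0}^{b-1}\varphi^i$ and let $\hat\Phi_b:A\to A$ be a function with $\chi_x(\Phi_b(d))=\chi_{\hat\Phi_b(x)}(d)$ for all $x,d\in A$. For $x\in A^k$, $b\in\mathbb{Z}_p^k$ put $\hat\Phi_b(x):=\sum_{j=1}^k\hat\Phi_{b_j}(x_j)$; $S^x_w:=\{b\in\mathbb{Z}_p^k:\hat\Phi_b(x)=w\}$,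 $\eta^x_w:=|S^x_w|$, $|S^x_w\rangle:=\eta_w^{x\,-1/2}\sum_{b\in S^x_w}|b\rangle$ (and $|S^x_w\rangle:=0$ if $\eta^x_w=0$), vectors in $\mathbb{C}^{A^k}\otimes\mathbb{C}^{\mathbb{Z}_p^k}$. For $d\in A$ define $\sigma_d:=\frac{1}{|G|^k}\sum_{x\in A^k}\sum_{w,v\in A}\chi_w(d)\overline{\chi_v(d)}\sqrt{\eta^x_w\eta^x_v}\,|x,S^x_w\rangle\langle x,S^x_v|$ (this is the Fourier-transformed $k$-copy hidden subgroup state for $\langle(d,1)\rangle$). *)

From HB Require Import structures.
From mathcomp Require Import all_boot all_order all_algebra algC.
Set Implicit Arguments.
Unset Strict Implicit.
Unset Printing Implicit Defensive.
Import Order.TTheory GRing.Theory Num.Theory Num.Def.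
Local Open Scope ring_scope.

Definition adjmx (m n : nat) (M : 'M[algC]_(m, n)) : 'M[algC]_(n, m) :=
  (map_mx conjC M)^T.

Definition psdmx (n : nat) (M : 'M[algC]_n) : Prop :=
  adjmx M = M /\ forall u : 'cV[algC]_n, 0 <= (adjmx u *m M *m u) 0 0.

Definition density_op (n : nat) (M : 'M[algC]_n) : Prop :=
  psdmx M /\ \tr M = 1.

(* Sigma^{-1/2}, inverse on the support, via the spectral decomposition
   S = P^{-1} diag(D) P (P unitary) of the normal matrix S. *)
Definition inv_sqrt_supp (z : algC) : algC :=
  if z == 0 then 0 else (sqrtC z)^-1.
Definition pinv_sqrtmx (n : nat) (S : 'M[algC]_n) : 'M[algC]_n :=
  invmx (spectralmx S) *m diag_mx (map_mx inv_sqrt_supp (spectral_diag S))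
    *m spectralmx S.

(* The Hilbert space C^{A^k} (x) C^{Z_p^k} is indexed by this finite type;
   Z_p is represented by 'I_p = {0,...,p-1}. *)
Definition Idx (A : finZmodType) (p k : nat) : finType :=
  ({ffun 'I_k -> A} * {ffun 'I_k -> 'I_p})%type.

Definition Phi (A : finZmodType) (phi : A -> A) (b : nat) (d : A) : A :=
  \sum_(i < b) iter i phi d.

Definition hatPhiT (A : finZmodType) (p k : nat) (hatPhi : 'I_p -> A -> A)
    (x : {ffun 'I_k -> A}) (b : {ffun 'I_k -> 'I_p}) : A :=
  \sum_(j < k) hatPhi (b j) (x j).

Definition Sset (A : finZmodType) (p k : nat) (hatPhi : 'I_p -> A -> A)
    (x : {ffun 'I_k -> A}) (w : A) : {set {ffun 'I_k -> 'I_p}} :=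
  [set b | hatPhiT hatPhi x b == w].

Definition etaS (A : finZmodType) (p k : nat) (hatPhi : 'I_p -> A -> A)
    (x : {ffun 'I_k -> A}) (w : A) : nat :=
  #|Sset hatPhi x w|.

(* |x, S^x_w> ; it is 0 when etaS^x_w = 0 (empty S^x_w) *)
Definition ketS (A : finZmodType) (p k : nat) (hatPhi : 'I_p -> A -> A)
    (x : {ffun 'I_k -> A}) (w : A) : 'cV[algC]_#|Idx A p k| :=
  \col_i (let t := @enum_val (Idx A p k) predT i in
          if (t.1 == x) && (t.2 \in Sset hatPhi x w)
          then (sqrtC (etaS hatPhi x w)%:R)^-1 else 0).

Definition ordG (A : finZmodType) (p : nat) : nat := (p * #|A|)%N.

Definition sigma (A : finZmodType) (p k : nat) (chi : A -> A -> algC)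
    (hatPhi : 'I_p -> A -> A) (d : A) : 'M[algC]_#|Idx A p k| :=
  ((ordG A p ^ k)%:R)^-1 *:
  \sum_(x : {ffun 'I_k -> A}) \sum_(w : A) \sum_(v : A)
     (chi w d * (chi v d)^* *
      sqrtC ((etaS hatPhi x w * etaS hatPhi x v)%N)%:R) *:
     (ketS hatPhi x w *m adjmx (ketS hatPhi x v)).

Definition Sigma (A : finZmodType) (p k : nat) (chi : A -> A -> algC)
    (hatPhi : 'I_p -> A -> A) : 'M[algC]_#|Idx A p k| :=
  \sum_(j : A) sigma k chi hatPhi j.

Definition Emeas (A : finZmodType) (p k : nat) (chi : A -> A -> algC)
    (hatPhi : 'I_p -> A -> A) (j : A) : 'M[algC]_#|Idx A p k| :=
  (#|A|%:R)^-1 *: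
  \sum_(x : {ffun 'I_k -> A}) \sum_(w : A) \sum_(v : A)
     (chi w j * (chi v j)^*) *:
     (ketS hatPhi x w *m adjmx (ketS hatPhi x v)).

Definition is_character (A : finZmodType) (f : A -> algC) : Prop :=
  (forall y z, f (y + z) = f y * f z) /\ (forall y, f y != 0).

Arguments Phi {A} phi b d.
Arguments hatPhiT {A p k} hatPhi x b.
Arguments Sset {A p k} hatPhi x w.
Arguments etaS {A p k} hatPhi x w.
Arguments ketS {A p k} hatPhi x w.
Arguments sigma {A p} k chi hatPhi d.
Arguments Sigma {A p} k chi hatPhi.
Arguments Emeas {A p} k chi hatPhi j.
Arguments is_character {A} f.

From HB Require Import structures.
From mathcomp Require Import all_boot all_order all_algebra.
From mathcomp Require Import fingroup cyclic algC ring.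
Import Order.TTheory GRing.Theory Num.Theory Num.Def.
Local Open Scope ring_scope.
Set Implicit Arguments.
Unset Strict Implicit.

(* The kets |x,S^x_w>, for distinct pairs (x,w), are orthonormal, or zero when S^x_w is empty.
   In this frame sigma_d = |G|^-k sum_x |u_{d,x}><u_{d,x}| with
   u_{d,x} = sum_w chi_w(d) sqrt(eta^x_w) |x,S^x_w>, and summing over d the orthogonality of the
   characters kills the cross terms w <> v: Sigma is diagonal in the kets, with eigenvalues
   |A| eta^x_w / |G|^k.  Hence Sigma^-1/2, whichever spectral decomposition computes it, rescales
   each ket and maps u_{j,x} to a multiple of v_{j,x} = sum_w chi_w(j) |x,S^x_w>, which yields E_j.
   As |chi_w(d)| = 1, the overlaps are <v_{d,x}|u_{d,y}> = [x = y] sum_w sqrt(eta^x_w), and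
   tr(E_d sigma_d) is the sum of their squares. *)

Lemma adjmx0 m n : adjmx (0 : 'M[algC]_(m, n)) = 0.
Proof. by apply/matrixP=> i j; rewrite !mxE rmorph0. Qed.

Lemma adjmxD m n (M N : 'M[algC]_(m, n)) : adjmx (M + N) = adjmx M + adjmx N.
Proof. by apply/matrixP=> i j; rewrite !mxE rmorphD. Qed.

Lemma adjmxZ m n a (M : 'M[algC]_(m, n)) : adjmx (a *: M) = a^* *: adjmx M.
Proof. by apply/matrixP=> i j; rewrite !mxE rmorphM. Qed.

Lemma adjmx_sum m n (I : finType) (F : I -> 'M[algC]_(m, n)) :
  adjmx (\sum_i F i) = \sum_i adjmx (F i).
Proof. exact: (big_morph _ (@adjmxD m n) (adjmx0 m n)). Qed.

Lemma adjmxM m n l (M : 'M[algC]_(m, n)) (N : 'M[algC]_(n, l)) :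
  adjmx (M *m N) = adjmx N *m adjmx M.
Proof. by rewrite /adjmx map_mxM trmx_mul. Qed.

Lemma adjmxK m n (M : 'M[algC]_(m, n)) : adjmx (adjmx M) = M.
Proof. by apply/matrixP=> i j; rewrite !mxE conjCK. Qed.

Lemma adjmx_mul_cV n (u v : 'cV[algC]_n) :
  adjmx u *m v = (\sum_i (u i 0)^* * v i 0)%:M.
Proof.
apply/matrixP=> i j; rewrite !ord1 !mxE /= mulr1n.
by apply: eq_bigr => l _; rewrite !mxE.
Qed.

Lemma mxtrace_outer n (u : 'cV[algC]_n) : \tr (u *m adjmx u) = (adjmx u *m u) 0 0.
Proof. by rewrite mxtrace_mulC trace_mx11. Qed.

Lemma mxtrace_outer_mul n (a b c d : 'cV[algC]_n) :
  \tr (a *m adjmx b *m (c *m adjmx d)) =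
  (adjmx d *m a) 0 0 * (adjmx b *m c) 0 0.
Proof.
rewrite mulmxA mxtrace_mulC !mulmxA -(mulmxA (adjmx d *m a)).
by rewrite trace_mx11 mxE big_ord1.
Qed.

Lemma sumZ_mul_adjmx m n l (I J : finType) (a : I -> algC) (b : J -> algC)
    (M : I -> 'M[algC]_(m, n)) (N : J -> 'M[algC]_(l, n)) :
  (\sum_i a i *: M i) *m adjmx (\sum_j b j *: N j) =
  \sum_i \sum_j (a i * (b j)^*) *: (M i *m adjmx (N j)).
Proof.
rewrite adjmx_sum mulmx_suml; apply: eq_bigr => i _.
rewrite mulmx_sumr; apply: eq_bigr => j _.
by rewrite adjmxZ -scalemxAl -scalemxAr scalerA.
Qed.

Lemma adjmx_sumZ_mul m n l (I J : finType) (a : I -> algC) (b : J -> algC)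
    (M : I -> 'M[algC]_(m, n)) (N : J -> 'M[algC]_(m, l)) :
  adjmx (\sum_i a i *: M i) *m (\sum_j b j *: N j) =
  \sum_i \sum_j ((a i)^* * b j) *: (adjmx (M i) *m N j).
Proof.
rewrite adjmx_sum mulmx_suml; apply: eq_bigr => i _.
rewrite mulmx_sumr; apply: eq_bigr => j _.
by rewrite adjmxZ -scalemxAl -scalemxAr scalerA.
Qed.

Lemma psdmx_sum_outer n (I : finType) (c : algC) (U : I -> 'cV[algC]_n) :
  0 <= c -> psdmx (c *: \sum_i U i *m adjmx (U i)).
Proof.
move=> c_ge0; split.
  rewrite adjmxZ adjmx_sum conj_Creal ?ger0_real //; congr (_ *: _).
  by apply: eq_bigr => i _; rewrite adjmxM adjmxK.
move=> u; rewrite -scalemxAr -scalemxAl mxE mulmx_sumr mulmx_suml summxE.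
apply: mulr_ge0 => //; apply: sumr_ge0 => i _.
rewrite !mulmxA -(mulmxA (adjmx u *m U i)) -[adjmx u *m U i]adjmxK adjmxM adjmxK.
rewrite adjmx_mul_cV mxE eqxx mulr1n.
by apply: sumr_ge0 => l _; rewrite mulrC mul_conjC_ge0.
Qed.

Lemma conj_sqrtC_nat (m : nat) : (sqrtC m%:R)^* = sqrtC m%:R :> algC.
Proof. by apply: conj_Creal; rewrite sqrtC_real ?ler0n. Qed.

Lemma sqrtC_nat_sq (m : nat) : sqrtC (m * m)%N%:R = m%:R :> algC.
Proof. by rewrite natrM sqrtCM ?nnegrE ?ler0n // -expr2 sqrtCK. Qed.

Lemma inv_sqrt_supp_real z : 0 <= z -> inv_sqrt_supp z \is Num.real.
Proof.
move=> z_ge0; rewrite /inv_sqrt_supp; case: eqP => _; first exact: real0.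
by rewrite rpredV sqrtC_real.
Qed.

Lemma inv_sqrt_suppM_sqrt (a b : algC) :
  0 < a -> 0 < b -> inv_sqrt_supp (a * b) * sqrtC b = (sqrtC a)^-1.
Proof.
move=> a_gt0 b_gt0; rewrite /inv_sqrt_supp mulf_eq0 !gt_eqF //=.
by rewrite sqrtCM ?nnegrE ?ltW // invfM mulfVK // sqrtC_eq0 gt_eqF.
Qed.

Section ProjSum.
Variables (n : nat) (I : finType) (e : I -> 'cV[algC]_n) (supp : pred I).
Hypothesis e_orth : forall a b,
  adjmx (e a) *m e b = (if a == b then (supp a)%:R else 0)%:M.
Hypothesis e_supp : forall a, ~~ supp a -> e a = 0.

Definition projsum (h : I -> algC) : 'M[algC]_n :=
  \sum_a h a *: (e a *m adjmx (e a)).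

Lemma projsum_eigen h b : projsum h *m e b = h b *: e b.
Proof.
rewrite /projsum mulmx_suml (bigD1 b) //= big1 ?addr0 => [|a /negbTE ab].
  rewrite -scalemxAl -mulmxA e_orth eqxx.
  have [supp_b|/e_supp->] := boolP (supp b); last by rewrite mul0mx !scaler0.
  by rewrite mul_mx_scalar scale1r.
by rewrite -scalemxAl -mulmxA e_orth ab mul_mx_scalar !scale0r scaler0.
Qed.

Lemma adjmx_projsum h : (forall a, h a \is Num.real) -> adjmx (projsum h) = projsum h.
Proof.
move=> h_real; rewrite adjmx_sum; apply: eq_bigr => a _.
by rewrite adjmxZ adjmxM adjmxK conj_Creal.
Qed.

(* [f 0 = 0] is needed: a left eigenvector for 0 need not lie in the span of the [e a]. *)
Lemma projsum_row_eigen (lam : I -> algC) (f : algC -> algC) (r : 'rV[algC]_n) mu :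
  f 0 = 0 -> r *m projsum lam = mu *: r -> r *m projsum (f \o lam) = f mu *: r.
Proof.
move=> f0 r_eigen.
have r_orth b : (r *m e b == 0) || (mu == lam b).
  have := congr1 (mulmx^~ (e b)) r_eigen.
  rewrite -mulmxA projsum_eigen -scalemxAr -scalemxAl => /eqP.
  by rewrite -subr_eq0 -scalerBl scaler_eq0 subr_eq0 orbC [lam b == _]eq_sym.
have r_projsum g : r *m projsum (g \o lam) = g mu *: \sum_b r *m (e b *m adjmx (e b)).
  rewrite /projsum mulmx_sumr scaler_sumr; apply: eq_bigr => b _.
  rewrite -scalemxAr; have /orP[/eqP rb0|/eqP ->] := r_orth b; last by [].
  by rewrite mulmxA rb0 !mul0mx !scaler0.
rewrite r_projsum; have [->|mu_neq0] := eqVneq mu 0; first by rewrite f0 !scale0r.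
by congr (_ *: _); apply: (scalerI mu_neq0); rewrite -r_projsum -r_eigen.
Qed.

Lemma projsum_spectral_fun (lam : I -> algC) (f : algC -> algC) :
  (forall a, lam a \is Num.real) -> f 0 = 0 ->
  invmx (spectralmx (projsum lam))
    *m diag_mx (map_mx f (spectral_diag (projsum lam))) *m spectralmx (projsum lam) =
  projsum (f \o lam).
Proof.
move=> lam_real f0; set S := projsum lam; set P := spectralmx S; set D := spectral_diag S.
have S_normal : S \is normalmx.
  have S_herm : (S ^t conjC)%sesqui = S by rewrite -map_trmx -[RHS]adjmx_projsum.
  by apply/normalmxP; rewrite S_herm.
have P_unit : P \in unitmx := spectral_unit S.
have PS : P *m S = diag_mx D *m P.
  by rewrite {1}(orthomx_spectralP S_normal) /P !mulmxA mulmxV // mul1mx.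
have PfS : P *m projsum (f \o lam) = diag_mx (map_mx f D) *m P.
  apply/row_matrixP => i.
  rewrite row_mul (row_mul i (diag_mx _)) row_diag_mx -scalemxAl -rowE mxE.
  apply: projsum_row_eigen => //.
  by rewrite -row_mul PS row_mul row_diag_mx -scalemxAl -rowE.
by rewrite -mulmxA -PfS mulmxA mulVmx // mul1mx.
Qed.

End ProjSum.

Lemma mulrn_card (A : finZmodType) (y : A) : y *+ #|A| = 0.
Proof. by rewrite -FinRing.zmodXgE -cardsT expg_cardG ?inE. Qed.

Lemma card_zmod_gt0 (A : finZmodType) : (0 < #|A|)%N.
Proof. by apply/card_gt0P; exists 0. Qed.

Section Characters.
Variables (A : finZmodType) (chi : A -> A -> algC).
Hypothesis chi_char : forall x, is_character (chi x).
Hypothesis chi_inj : forall x x', (forall y, chi x y = chi x' y) -> x = x'.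
Hypothesis chi_mul : forall x x' y, chi x y * chi x' y = chi (x + x') y.

Lemma chi_at0 x : chi x 0 = 1.
Proof.
have [chiD chi_neq0] := chi_char x.
by apply: (mulfI (chi_neq0 0)); rewrite -chiD addr0 mulr1.
Qed.

Lemma chi0 y : chi 0 y = 1.
Proof.
by apply: (mulfI (proj2 (chi_char 0) y)); rewrite chi_mul addr0 mulr1.
Qed.

Lemma chi_mulrn x y m : chi x (y *+ m) = chi x y ^+ m.
Proof.
elim: m => [|m IHm]; first by rewrite mulr0n expr0 chi_at0.
by rewrite mulrS exprS (proj1 (chi_char x)) IHm.
Qed.

Lemma norm_chi x y : `|chi x y| = 1.
Proof.
have chi_unity : chi x y ^+ #|A| = 1 by rewrite -chi_mulrn mulrn_card chi_at0.
by apply/eqP; rewrite -(pexpr_eq1 (card_zmod_gt0 A)) // -normrX chi_unity normr1.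
Qed.

Lemma mul_conj_chi x y : (chi x y)^* * chi x y = 1.
Proof. by rewrite mulrC -normCK norm_chi expr1n. Qed.

Lemma conj_chi x y : (chi x y)^* = chi (- x) y.
Proof.
apply: (mulIf (proj2 (chi_char x) y)).
by rewrite mul_conj_chi chi_mul addNr chi0.
Qed.

Lemma sum_chi u : \sum_j chi u j = if u == 0 then #|A|%:R else 0.
Proof.
have [->|u_neq0] := eqVneq u 0.
  by under eq_bigr do rewrite chi0; rewrite sumr_const.
have [y chi_uy_neq1] : exists y, chi u y != 1.
  apply/existsP; apply: contraR u_neq0 => /existsPn chi_u1.
  by apply/eqP/chi_inj => y; rewrite chi0; apply/eqP; rewrite -[_ == _]negbK chi_u1.
have sum_invariant : \sum_j chi u j = (\sum_j chi u j) * chi u y.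
  rewrite mulr_suml [LHS](reindex_inj (addIr y)) /=.
  by apply: eq_bigr => j _; rewrite (proj1 (chi_char u)).
apply/eqP; move/eqP: sum_invariant; rewrite -subr_eq0 -{1}(mulr1 (\sum_j _)).
by rewrite -mulrBr mulf_eq0 subr_eq0 [1 == _]eq_sym (negbTE chi_uy_neq1) orbF.
Qed.

Lemma chi_orthogonality w v :
  \sum_j chi w j * (chi v j)^* = if w == v then #|A|%:R else 0.
Proof. by under eq_bigr do rewrite conj_chi chi_mul; rewrite sum_chi subr_eq0. Qed.

End Characters.

Section Kets.
Variables (A : finZmodType) (p k : nat) (hatPhi : 'I_p -> A -> A).
Implicit Types (x y : {ffun 'I_k -> A}) (w v : A).

Lemma sum_etaS x : (\sum_w etaS hatPhi x w = p ^ k)%N.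
Proof.
have -> : (p ^ k = #|{ffun 'I_k -> 'I_p}|)%N by rewrite card_ffun !card_ord.
rewrite -sum1_card (partition_big (hatPhiT hatPhi x) xpredT) //=; apply: eq_bigr => w _.
by rewrite /etaS -sum1_card; apply: eq_bigl => b; rewrite inE.
Qed.

Lemma ketS_eq0 x w : etaS hatPhi x w = 0%N -> ketS hatPhi x w = 0.
Proof.
move=> /eqP; rewrite cards_eq0 => /eqP S0.
by apply/matrixP => i j; rewrite !mxE S0 /= in_set0 andbF.
Qed.

Lemma ketSE x w (t : Idx A p k) :
  ketS hatPhi x w (enum_rank t) 0 =
  if (t.1 == x) && (t.2 \in Sset hatPhi x w)
  then (sqrtC (etaS hatPhi x w)%:R)^-1 else 0.
Proof. by rewrite mxE enum_rankK. Qed.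

Lemma ketS_orth (a b : {ffun 'I_k -> A} * A) :
  adjmx (ketS hatPhi a.1 a.2) *m ketS hatPhi b.1 b.2 =
  (if a == b then (etaS hatPhi a.1 a.2 != 0%N)%:R else 0)%:M.
Proof.
rewrite adjmx_mul_cV (reindex enum_rank) /=; last first.
  by exists enum_val => t _; [exact: enum_rankK | exact: enum_valK].
congr (_%:M); under eq_bigr do rewrite !ketSE.
have [<-{b}|a_neq_b] := eqVneq a b; last first.
  apply: big1 => t _; case: ifPn => [/andP[/eqP ta Sa]|]; last by rewrite rmorph0 mul0r.
  case: ifPn => [/andP[/eqP tb Sb]|]; last by rewrite mulr0.
  case/eqP: a_neq_b; case: a b ta tb Sa Sb => [x w] [y v] /= <- <-.
  by rewrite !inE => /eqP <- /eqP <-.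
case: a => x w /=; set c := (sqrtC _)^-1.
have c_real : c^* = c by rewrite conj_Creal // rpredV sqrtC_real ?ler0n.
transitivity (\sum_(t : Idx A p k | (t.1 == x) && (t.2 \in Sset hatPhi x w)) c * c).
  rewrite [RHS]big_mkcond; apply: eq_bigr => t _.
  by rewrite (fun_if conjC) rmorph0 c_real; case: ifP; rewrite ?mulr0.
rewrite sumr_const (eq_card (B := [predX pred1 x & Sset hatPhi x w])) => [|t]; last first.
  by rewrite !inE.
rewrite cardX card1 mul1n -/(etaS hatPhi x w).
have [->|eta_neq0] := eqVneq (etaS hatPhi x w) 0%N; first by rewrite mulr0n.
by rewrite /c -expr2 exprVn sqrtCK -[LHS]mulr_natr mulVf ?pnatr_eq0.
Qed.

Lemma ketS_gram x y (al be : A -> algC) :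
  adjmx (\sum_w al w *: ketS hatPhi x w) *m (\sum_v be v *: ketS hatPhi y v) =
  (if x == y then \sum_w (al w)^* * be w * (etaS hatPhi x w != 0%N)%:R else 0)%:M.
Proof.
rewrite adjmx_sumZ_mul.
under eq_bigr => w _ do under eq_bigr => v _ do rewrite (ketS_orth (x, w) (y, v)) /= xpair_eqE.
case: (boolP (x == y)) => _ /=; last first.
  by rewrite raddf0; apply: big1 => w _; apply: big1 => v _; rewrite scaler0.
rewrite raddf_sum; apply: eq_bigr => w _ /=.
rewrite (bigD1 w) //= eqxx big1 ?addr0 ?scale_scalar_mx // => v /negbTE v_neq_w.
by rewrite [w == v]eq_sym v_neq_w raddf0 scaler0.
Qed.

End Kets.

Section Measurement.
Variables (A : finZmodType) (p k : nat) (chi : A -> A -> algC) (hatPhi : 'I_p -> A -> A).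
Hypothesis chi_char : forall x, is_character (chi x).
Hypothesis chi_inj : forall x x', (forall y, chi x y = chi x' y) -> x = x'.
Hypothesis chi_mul : forall x x' y, chi x y * chi x' y = chi (x + x') y.
Hypothesis p_gt0 : (0 < p)%N.
Implicit Types (x y : {ffun 'I_k -> A}) (d j w v : A).

Definition sigma_ket d x : 'cV[algC]_#|Idx A p k| :=
  \sum_w (chi w d * sqrtC (etaS hatPhi x w)%:R) *: ketS hatPhi x w.

Definition Emeas_ket d x : 'cV[algC]_#|Idx A p k| :=
  \sum_w chi w d *: ketS hatPhi x w.

Lemma sigma_ketE d :
  sigma k chi hatPhi d =
  ((ordG A p ^ k)%:R)^-1 *: \sum_x sigma_ket d x *m adjmx (sigma_ket d x).
Proof.
rewrite /sigma; congr (_ *: _); apply: eq_bigr => x _.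
rewrite sumZ_mul_adjmx; apply: eq_bigr => w _; apply: eq_bigr => v _.
by rewrite (rmorphM conjC) /= conj_sqrtC_nat natrM sqrtCM ?nnegrE ?ler0n // mulrACA.
Qed.

Lemma Emeas_ketE d :
  Emeas k chi hatPhi d = (#|A|%:R)^-1 *: \sum_x Emeas_ket d x *m adjmx (Emeas_ket d x).
Proof. by rewrite /Emeas; congr (_ *: _); apply: eq_bigr => x _; rewrite sumZ_mul_adjmx. Qed.

Definition Sigma_scale : algC := #|A|%:R / (ordG A p ^ k)%:R.

Lemma Sigma_diag :
  Sigma k chi hatPhi =
  Sigma_scale *:
  \sum_x \sum_w (etaS hatPhi x w)%:R *: (ketS hatPhi x w *m adjmx (ketS hatPhi x w)).
Proof.
rewrite /Sigma /sigma /Sigma_scale -scaler_sumr mulrC -scalerA; congr (_ *: _).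
rewrite exchange_big scaler_sumr; apply: eq_bigr => x _.
rewrite exchange_big scaler_sumr; apply: eq_bigr => w _.
rewrite exchange_big (bigD1 w) //= [X in _ + X]big1 ?addr0 => [|v /negbTE v_neq_w].
  by rewrite -scaler_suml -mulr_suml chi_orthogonality // eqxx sqrtC_nat_sq scalerA.
by rewrite -scaler_suml -mulr_suml chi_orthogonality // eq_sym v_neq_w mul0r scale0r.
Qed.

Lemma sigma_ket_gram d x : adjmx (sigma_ket d x) *m sigma_ket d x = (p ^ k)%:R%:M.
Proof.
rewrite ketS_gram eqxx -(sum_etaS hatPhi x) natr_sum; congr (_%:M); apply: eq_bigr => w _.
rewrite (rmorphM conjC) /= conj_sqrtC_nat mulrACA mul_conj_chi // mul1r -expr2 sqrtCK.
by case: eqP => [->|]; rewrite ?mulr0 ?mulr1.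
Qed.

Lemma Emeas_sigma_ket_dot d x y :
  (adjmx (Emeas_ket d x) *m sigma_ket d y) 0 0 =
  if x == y then \sum_w sqrtC (etaS hatPhi x w)%:R else 0.
Proof.
rewrite ketS_gram; have [<-{y}|_] := eqVneq x y; rewrite mxE eqxx mulr1n //.
apply: eq_bigr => w _; rewrite mulrA mul_conj_chi // mul1r.
by case: eqP => [->|]; rewrite ?sqrtC0 ?mulr0 ?mulr1.
Qed.

Lemma sigma_Emeas_ket_dot d x y :
  (adjmx (sigma_ket d y) *m Emeas_ket d x) 0 0 =
  if x == y then \sum_w sqrtC (etaS hatPhi x w)%:R else 0.
Proof.
rewrite -[Emeas_ket d x]adjmxK -adjmxM 2!mxE Emeas_sigma_ket_dot.
case: ifP => _; rewrite ?rmorph0 // conj_Creal // rpred_sum // => w _.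
by rewrite sqrtC_real ?ler0n.
Qed.

Lemma ordG_gt0 : (0 < ordG A p)%N.
Proof. by rewrite muln_gt0 p_gt0 card_zmod_gt0. Qed.

Lemma ordGX_neq0 : (ordG A p ^ k)%:R != 0 :> algC.
Proof. by rewrite pnatr_eq0 -lt0n expn_gt0 ordG_gt0. Qed.

Lemma Sigma_scale_gt0 : 0 < Sigma_scale.
Proof. by rewrite divr_gt0 ?ltr0n ?card_zmod_gt0 ?expn_gt0 ?ordG_gt0. Qed.

Lemma sigma_density d : density_op (sigma k chi hatPhi d).
Proof.
rewrite sigma_ketE; split; first by apply: psdmx_sum_outer; rewrite invr_ge0 ler0n.
rewrite mxtraceZ raddf_sum /=.
under eq_bigr do rewrite mxtrace_outer sigma_ket_gram mxE eqxx mulr1n.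
by rewrite sumr_const card_ffun !card_ord -mulrnA -expnMn mulVf ?ordGX_neq0.
Qed.

Definition ketS_pair (a : {ffun 'I_k -> A} * A) := ketS hatPhi a.1 a.2.

Definition Sigma_eigval (a : {ffun 'I_k -> A} * A) : algC :=
  Sigma_scale * (etaS hatPhi a.1 a.2)%:R.

Lemma ketS_pair_eq0 a : ~~ (etaS hatPhi a.1 a.2 != 0%N) -> ketS_pair a = 0.
Proof. by move/negPn/eqP; apply: ketS_eq0. Qed.

Lemma Sigma_eigval_ge0 a : 0 <= Sigma_eigval a.
Proof. by rewrite mulr_ge0 ?ler0n // ltW ?Sigma_scale_gt0. Qed.

Lemma Sigma_projsum : Sigma k chi hatPhi = projsum ketS_pair Sigma_eigval.
Proof.
rewrite Sigma_diag /projsum.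
rewrite -(pair_bigA _ (fun x w =>
  Sigma_eigval (x, w) *: (ketS_pair (x, w) *m adjmx (ketS_pair (x, w))))).
rewrite scaler_sumr; apply: eq_bigr => x _.
by rewrite scaler_sumr; apply: eq_bigr => w _; rewrite scalerA.
Qed.

Lemma pinv_sqrt_Sigma :
  pinv_sqrtmx (Sigma k chi hatPhi) = projsum ketS_pair (inv_sqrt_supp \o Sigma_eigval).
Proof.
rewrite /pinv_sqrtmx Sigma_projsum.
apply: (projsum_spectral_fun (ketS_orth hatPhi) ketS_pair_eq0) => [a|].
  exact: ger0_real (Sigma_eigval_ge0 a).
by rewrite /inv_sqrt_supp eqxx.
Qed.

Lemma pinv_sqrt_Sigma_sigma_ket j x :
  pinv_sqrtmx (Sigma k chi hatPhi) *m sigma_ket j x =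
  (sqrtC Sigma_scale)^-1 *: Emeas_ket j x.
Proof.
rewrite pinv_sqrt_Sigma mulmx_sumr scaler_sumr; apply: eq_bigr => w _.
rewrite -scalemxAr (projsum_eigen (ketS_orth hatPhi) ketS_pair_eq0 _ (x, w)) !scalerA.
have [eta0|eta_neq0] := eqVneq (etaS hatPhi x w) 0%N; first by rewrite ketS_eq0 // !scaler0.
congr (_ *: _); rewrite /= /Sigma_eigval [LHS]mulrC [chi w j * _]mulrC mulrA.
rewrite inv_sqrt_suppM_sqrt //; first exact: Sigma_scale_gt0.
by rewrite ltr0n lt0n.
Qed.

Lemma pgm_Emeas j :
  pinv_sqrtmx (Sigma k chi hatPhi) *m sigma k chi hatPhi j
    *m pinv_sqrtmx (Sigma k chi hatPhi) = Emeas k chi hatPhi j.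
Proof.
set X := pinv_sqrtmx _.
have X_herm : adjmx X = X.
  by rewrite /X pinv_sqrt_Sigma adjmx_projsum // => a; apply/inv_sqrt_supp_real/Sigma_eigval_ge0.
have conj_inv_sqrt_scale : ((sqrtC Sigma_scale)^-1)^* = (sqrtC Sigma_scale)^-1.
  by rewrite conj_Creal // rpredV sqrtC_real // ltW // Sigma_scale_gt0.
have X_sigma_X x : X *m (sigma_ket j x *m adjmx (sigma_ket j x)) *m X =
    (sqrtC Sigma_scale)^-2 *: (Emeas_ket j x *m adjmx (Emeas_ket j x)).
  rewrite mulmxA -mulmxA -{2}X_herm -adjmxM pinv_sqrt_Sigma_sigma_ket adjmxZ.
  by rewrite conj_inv_sqrt_scale -scalemxAl -scalemxAr scalerA -exprVn expr2.
rewrite sigma_ketE Emeas_ketE -scalemxAr -scalemxAl mulmx_sumr mulmx_suml.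
rewrite (eq_bigr _ (fun x _ => X_sigma_X x)) -scaler_sumr scalerA; congr (_ *: _).
by rewrite sqrtCK /Sigma_scale invf_div mulKf ?ordGX_neq0.
Qed.

Lemma tr_Emeas_sigma d :
  \tr (Emeas k chi hatPhi d *m sigma k chi hatPhi d) =
  (p%:R / (ordG A p ^ k.+1)%:R) *
  \sum_(x : {ffun 'I_k -> A}) (\sum_w sqrtC (etaS hatPhi x w)%:R) ^+ 2.
Proof.
rewrite Emeas_ketE sigma_ketE -scalemxAl -scalemxAr !mxtraceZ mulmx_suml raddf_sum /=.
under eq_bigr do rewrite mulmx_sumr raddf_sum /=.
under eq_bigr do under eq_bigr do
  rewrite mxtrace_outer_mul sigma_Emeas_ket_dot Emeas_sigma_ket_dot.
rewrite mulrA; congr (_ * _).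
  rewrite expnS natrM /ordG natrM; field.
  by rewrite -/(ordG A p) ordGX_neq0 !pnatr_eq0 -!lt0n card_zmod_gt0 p_gt0.
apply: eq_bigr => x _; rewrite (bigD1 x) //= eqxx [X in _ + X]big1 ?addr0 ?expr2 // => y.
by rewrite eq_sym => /negbTE ->; rewrite mul0r.
Qed.

End Measurement.

Theorem mainTheorem6
  (A : finZmodType) (p : nat) (p_prime : prime p)
  (phi : A -> A)
  (phi_add : forall a b, phi (a + b) = phi a + phi b)
  (phi_bij : bijective phi)
  (phi_p : forall a, iter p phi a = a)
  (k : nat) (k_gt0 : (0 < k)%N)
  (chi : A -> A -> algC)
  (chi_char : forall x, is_character (chi x))
  (chi_all : forall f : A -> algC, is_character f -> exists x, forall y, chi x y = f y)
  (chi_inj : forall x x', (forall y, chi x y = chi x' y) -> x = x')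
  (chi_mul : forall x x' y, chi x y * chi x' y = chi (x + x') y)
  (chi_sym : forall x y, chi x y = chi y x)
  (hatPhi : 'I_p -> A -> A)
  (hatPhi_spec : forall (b : 'I_p) (x d : A),
      chi x (Phi phi b d) = chi (hatPhi b x) d) :
  [/\ Sigma k chi hatPhi =
        (#|A|%:R / (ordG A p ^ k)%:R) *:
        \sum_(x : {ffun 'I_k -> A}) \sum_(w : A)
           (etaS hatPhi x w)%:R *: (ketS hatPhi x w *m adjmx (ketS hatPhi x w)),
      forall d : A, density_op (sigma k chi hatPhi d),
      forall j : A,
        pinv_sqrtmx (Sigma k chi hatPhi) *m sigma k chi hatPhi j
          *m pinv_sqrtmx (Sigma k chi hatPhi) = Emeas k chi hatPhi j
    & forall d : A,
        \tr (Emeas k chi hatPhi d *m sigma k chi hatPhi d) =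
        (p%:R / (ordG A p ^ k.+1)%:R) *
        \sum_(x : {ffun 'I_k -> A}) (\sum_(w : A) sqrtC (etaS hatPhi x w)%:R) ^+ 2].
Proof.
have p_gt0 := prime_gt0 p_prime.
split.
- exact: Sigma_diag chi_char chi_inj chi_mul.
- by move=> d; apply: sigma_density.
- by move=> j; apply: pgm_Emeas.
- by move=> d; apply: tr_Emeas_sigma.
Qed.
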